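(* Let $\mathcal R$ be a partial $Z$-regulus and let $E\in\mathcal R$. Then the assignment $L\mapsto L\cap E$ is a bijection from the set of directrices of $\mathcal R$ onto the set of points of $E$. Consequently, each point of $E$ lies on a unique directrix of $\mathcal R$.
   Context: $K$ is a (not necessarily commutative) field with centre $Z$, and $V$ is a left vector space over $K$ of arbitrary (possibly infinite) dimension with $\dim V>2$. $\mathcal G:=\{X\le V\mid X\cong V/X\}$, assumed nonempty. Points are $1$-dimensional and lines are $2$-dimensional subspaces of $V$; two subspaces meet if they have a common point. Two elements $X,Y\in\mathcal G$ are distant if $V=X\oplus Y$. A partial $Z$-regulus is a subset $\mathcal R\subseteq\mathcal G$ such that (R1) the elements of $\mathcal R$ are mutually distant and $|\mathcal R|\ge 3$, and (R2) whenever a line meets three mutually distinct elements of $\mathcal R$, it meets all elements of $\mathcal R$. A directrix of $\mathcal R$ is a line meeting all elements of $\mathcal R$. *)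

(* K is a division ring (unitRingType in which every nonzero
   element is a unit), V a left K-module (lmodType K) = left vector space. *)
From mathcomp Require Import all_boot all_algebra.
Set Implicit Arguments. Unset Strict Implicit. Unset Printing Implicit Defensive.
Import GRing.Theory.
Local Open Scope ring_scope.

Section ProjDefs.
Variables (K : unitRingType) (V : lmodType K).

Definition division_ring := forall x : K, x != 0 -> x \is a GRing.unit.

Definition dim_gt2 := exists u v w : V,
  forall a b c : K, a *: u + b *: v + c *: w = 0 -> [/\ a = 0, b = 0 & c = 0].

Definition subspace (X : V -> Prop) :=
  [/\ X 0, (forall x y, X x -> X y -> X (x + y)) & (forall (a : K) x, X x -> X (a *: x))].

Definition klinear (f : V -> V) := forall (a : K) x y, f (a *: x + y) = a *: f x + f y.

(* X is isomorphic to V/X: by the first isomorphism theorem, iff there is a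
   K-linear map V -> V with image X and kernel X. *)
Definition inG (X : V -> Prop) :=
  subspace X /\ exists f : V -> V, [/\ klinear f,
     (forall y, X y <-> exists x, f x = y) & (forall x, f x = 0 <-> X x)].

Definition point (P : V -> Prop) :=
  exists v : V, v != 0 /\ P = (fun x => exists a : K, x = a *: v).

Definition indep2 (u w : V) := forall a b : K, a *: u + b *: w = 0 -> a = 0 /\ b = 0.

Definition line (L : V -> Prop) :=
  exists u w : V, indep2 u w /\ L = (fun x => exists a b : K, x = a *: u + b *: w).

Definition meets (X Y : V -> Prop) :=
  exists P, [/\ point P, (forall x, P x -> X x) & (forall x, P x -> Y x)].

Definition distant (X Y : V -> Prop) :=
  (forall x, X x -> Y x -> x = 0) /\
  (forall v, exists x y, [/\ X x, Y y & v = x + y]).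

Definition partial_regulus (R : (V -> Prop) -> Prop) :=
  [/\ (forall X, R X -> inG X),
      (forall X Y, R X -> R Y -> X <> Y -> distant X Y),
      (exists X1 X2 X3, [/\ R X1, R X2, R X3 & [/\ X1 <> X2, X1 <> X3 & X2 <> X3]]) &
      (forall L, line L -> forall X1 X2 X3, R X1 -> R X2 -> R X3 ->
         X1 <> X2 -> X1 <> X3 -> X2 <> X3 ->
         meets L X1 -> meets L X2 -> meets L X3 ->
         forall X, R X -> meets L X)].

Definition directrix (R : (V -> Prop) -> Prop) (L : V -> Prop) :=
  line L /\ forall X, R X -> meets L X.

Definition capS (X Y : V -> Prop) : V -> Prop := fun x => X x /\ Y x.

End ProjDefs.

From mathcomp Require Import all_boot all_algebra.
From Stdlib Require Import Classical FunctionalExtensionality PropExtensionality.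
Set Implicit Arguments. Unset Strict Implicit. Unset Printing Implicit Defensive.
Import GRing.Theory.
Local Open Scope ring_scope.

(* Pick two further elements F, G of the regulus.  Since V = F (+) G, every
   v in E decomposes uniquely as v = f + g, and the line <f, g> meets E, F
   and G, hence is a directrix by (R2).  Conversely a directrix L through v
   meets F and G in points <y>, <z>, so L = <y, z>; uniqueness of the
   decomposition of v in F (+) G forces f, g to lie on L, so L = <f, g>.
   Finally L meets E in a single point, since a second independent vector of
   E on L would put all of L, and thus L cap F, inside E. *)

Lemma pred_ext (T : Type) (P Q : T -> Prop) : (forall x, P x <-> Q x) -> P = Q.
Proof.
by move=> h; apply: functional_extensionality => x; apply: propositional_extensionality.
Qed.

Lemma exists_two_others (T : Type) (R : T -> Prop) (E : T) :
  (exists X1 X2 X3, [/\ R X1, R X2, R X3 & [/\ X1 <> X2, X1 <> X3 & X2 <> X3]]) ->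
  exists F G, [/\ R F, R G, F <> E, G <> E & F <> G].
Proof.
case=> X1 [X2 [X3 [h1 h2 h3 [n12 n13 n23]]]].
case: (classic (X1 = E)) => [<-|e1]; first by exists X2, X3; split => //; apply: nesym.
case: (classic (X2 = E)) => [<-|e2]; first by exists X1, X3; split => //; apply: nesym.
by exists X1, X2; split => //; apply: nesym.
Qed.

Section Subspaces.
Variables (K : unitRingType) (V : lmodType K).
Implicit Types (S L P Q X Y : V -> Prop) (a b : K) (u v w x y z : V).

Definition span1 v : V -> Prop := fun x => exists a, x = a *: v.
Definition span2 u w : V -> Prop := fun x => exists a b, x = a *: u + b *: w.

Lemma subspaceD S x y : subspace S -> S x -> S y -> S (x + y).
Proof. by case=> _ hD _; apply: hD. Qed.

Lemma subspaceZ S a x : subspace S -> S x -> S (a *: x).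
Proof. by case=> _ _ hZ; apply: hZ. Qed.

Lemma subspaceB S x y : subspace S -> S x -> S y -> S (x - y).
Proof. by move=> hS Sx Sy; rewrite -scaleN1r; apply: subspaceD hS Sx (subspaceZ _ hS Sy). Qed.

Lemma span2_subspace u w : subspace (span2 u w).
Proof.
split.
- by exists 0, 0; rewrite !scale0r addr0.
- by move=> _ _ [a [b ->]] [c [d ->]]; exists (a + c), (b + d); rewrite !scalerDl addrACA.
- by move=> c _ [a [b ->]]; exists (c * a), (c * b); rewrite scalerDr !scalerA.
Qed.

Lemma span2_sub S u w : subspace S -> S u -> S w -> forall x, span2 u w x -> S x.
Proof. by move=> hS Su Sw _ [a [b ->]]; apply: subspaceD hS (subspaceZ _ hS Su) (subspaceZ _ hS Sw). Qed.

Lemma span2_l u w : span2 u w u.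
Proof. by exists 1, 0; rewrite scale1r scale0r addr0. Qed.

Lemma span2_r u w : span2 u w w.
Proof. by exists 0, 1; rewrite scale1r scale0r add0r. Qed.

Lemma span2C u w x : span2 u w x -> span2 w u x.
Proof. by case=> a [b ->]; exists b, a; rewrite addrC. Qed.

Lemma line_subspace L : line L -> subspace L.
Proof. by case=> u [w [_ ->]]; apply: span2_subspace. Qed.

Lemma point_span1 P : point P -> exists v, [/\ v != 0, P v & P = span1 v].
Proof. by case=> v [nv ->]; exists v; split => //; exists 1; rewrite scale1r. Qed.

Lemma indep2_neq0 u w : indep2 u w -> u != 0 /\ w != 0.
Proof.
have one_neq0 : (1 : K) != 0 := oner_neq0 K.
move=> hi; split; apply/eqP => e0.
- by have [] := hi 1 0; rewrite ?e0 ?scaler0 ?scale0r ?addr0 // => /eqP; rewrite (negPf one_neq0).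
- by have [] := hi 0 1; rewrite ?e0 ?scaler0 ?scale0r ?addr0 // => _ /eqP; rewrite (negPf one_neq0).
Qed.

Lemma meets_of_vec X Y v : v != 0 -> subspace X -> subspace Y -> X v -> Y v -> meets X Y.
Proof.
move=> nv sX sY Xv Yv; exists (span1 v); split; first by exists v.
- by move=> _ [a ->]; apply: subspaceZ.
- by move=> _ [a ->]; apply: subspaceZ.
Qed.

Lemma sum_unique X Y x1 x2 y1 y2 :
  (forall x, X x -> Y x -> x = 0) -> subspace X -> subspace Y ->
  X x1 -> X x2 -> Y y1 -> Y y2 -> x1 + y1 = x2 + y2 -> x1 = x2 /\ y1 = y2.
Proof.
move=> hXY sX sY X1 X2 Y1 Y2 e.
have exy : x1 - x2 = y2 - y1 by rewrite -[x1](addrK y1) e addrC addrA addKr.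
have d0 : x1 - x2 = 0 by apply: hXY; [apply: subspaceB | rewrite exy; apply: subspaceB].
by split; [apply: subr0_eq | apply/esym/subr0_eq; rewrite -exy].
Qed.

Hypothesis hK : division_ring K.

Lemma scaleVK a v : a != 0 -> a^-1 *: (a *: v) = v.
Proof. by move=> an; rewrite scalerA mulVr ?scale1r //; apply: hK. Qed.

Lemma scaler_eq0_l a v : a *: v = 0 -> v != 0 -> a = 0.
Proof.
move=> e nv; apply: contra_neq_eq nv => an.
by rewrite -(scaleVK v an) e scaler0.
Qed.

Lemma indep2_of_nspan1 v x : v != 0 -> ~ span1 v x -> indep2 v x.
Proof.
move=> nv nx a b e; case: (eqVneq b 0) => [b0 | bn].
  by rewrite b0 scale0r addr0 in e; split => //; apply: scaler_eq0_l e nv.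
exfalso; apply: nx; exists (- (b^-1 * a)).
have ebx : b *: x = - (a *: v) by apply/eqP; rewrite -addr_eq0 addrC e.
by rewrite -(scaleVK x bn) ebx scalerN scalerA scaleNr.
Qed.

Lemma indep2_of_trivial_cap X Y y z :
  (forall x, X x -> Y x -> x = 0) -> subspace X -> subspace Y ->
  X y -> Y z -> y != 0 -> z != 0 -> indep2 y z.
Proof.
move=> hXY sX sY Xy Yz ny nz a b e.
have eab : a *: y = (- b) *: z by rewrite scaleNr; apply/eqP; rewrite -addr_eq0 e.
have ay0 : a *: y = 0 by apply: hXY; [apply: subspaceZ | rewrite eab; apply: subspaceZ].
split; first exact: scaler_eq0_l ay0 ny.
by apply/oppr_inj; rewrite oppr0; apply: scaler_eq0_l nz; rewrite -eab.
Qed.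

Lemma point_sub_eq P Q : point P -> point Q -> (forall x, P x -> Q x) -> P = Q.
Proof.
move=> /point_span1 [v [nv _ ->]] /point_span1 [w [_ _ ->]] hPQ.
have [a ea] : span1 w v by apply: hPQ; exists 1; rewrite scale1r.
have an : a != 0 by apply: contra_neq nv => a0; rewrite ea a0 scale0r.
apply: pred_ext => x; split; first exact: hPQ.
by case=> b ->; exists (b * a^-1); rewrite ea scalerA mulrVK //; apply: hK.
Qed.

Lemma span2_exchange u w x a b : x = a *: u + b *: w -> a != 0 -> span2 x w u.
Proof.
move=> ex an; exists a^-1, (- (a^-1 * b)).
by rewrite ex scalerDr scaleVK // scaleNr -scalerA addrK.
Qed.

Lemma line_eq_span2 L p q : line L -> indep2 p q -> L p -> L q -> L = span2 p q.
Proof.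
move=> hL hpq Lp Lq; apply: pred_ext => x; split; last exact: span2_sub (line_subspace hL) Lp Lq x.
case: hL Lp Lq => u [w [_ ->]] [a [b ep]] Lq.
have [np nq] := indep2_neq0 hpq.
suff [Su Sw] : span2 p q u /\ span2 p q w by apply: span2_sub (span2_subspace p q) Su Sw x.
wlog an : u w a b ep Lq / a != 0.
  move=> hwlog; case: (eqVneq a 0) => [a0 | ]; last exact: hwlog ep Lq.
  have bn : b != 0 by apply: contra_neq np => b0; rewrite ep a0 b0 !scale0r addr0.
  by have [] := hwlog w u b a (etrans ep (addrC _ _)) (span2C Lq) bn.
have Su : span2 p w u := span2_exchange ep an.
have [c [d eq]] : span2 p w q.
  by apply: span2_sub Lq; [apply: span2_subspace | exact: Su | apply: span2_r].
have dn : d != 0.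
  apply: contra_neq (oner_neq0 K) => d0; apply/oppr_inj; rewrite oppr0.
  have : c *: p + (-1) *: q = 0 by rewrite scaleN1r eq d0 scale0r addr0 subrr.
  by case/hpq.
have Sw : span2 p q w by apply: span2C; apply: span2_exchange dn; rewrite eq addrC.
by split => //; apply: span2_sub Su; [apply: span2_subspace | apply: span2_l |].
Qed.

End Subspaces.

Section Regulus.
Variables (K : unitRingType) (V : lmodType K).
Hypothesis hK : division_ring K.
Variables (R : (V -> Prop) -> Prop) (E F G : V -> Prop).
Hypotheses (hR : partial_regulus R) (hE : R E) (hF : R F) (hG : R G).
Hypotheses (nFE : F <> E) (nGE : G <> E) (nFG : F <> G).

Lemma regulus_subspace X : R X -> subspace X.
Proof. by case: hR => hRG _ _ _ /hRG []. Qed.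

Lemma regulus_cap0 X Y : R X -> R Y -> X <> Y -> forall x, X x -> Y x -> x = 0.
Proof. by case: hR => _ hdist _ _ RX RY nXY; case: (hdist X Y RX RY nXY). Qed.

Lemma directrix_meet L X : directrix R L -> R X -> exists y, [/\ y != 0, L y & X y].
Proof.
case=> _ hmeet /hmeet [P [/point_span1 [y [ny Py _]] PL PX]].
by exists y; split; [| exact: PL | exact: PX].
Qed.

Lemma directrix_capS_point L : directrix R L -> point (capS L E).
Proof.
move=> dL; have [v [nv Lv Ev]] := directrix_meet dL hE.
have sE := regulus_subspace hE; have sL := line_subspace dL.1.
exists v; split => //; apply: pred_ext => x; split; last first.
  by case=> a ->; split; apply: subspaceZ.
case=> Lx Ex; apply: NNPP => nx.
have eL := line_eq_span2 hK dL.1 (indep2_of_nspan1 hK nv nx) Lv Lx.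
have [y [ny Ly Fy]] := directrix_meet dL hF.
apply: (negP ny); apply/eqP; apply: (regulus_cap0 hE hF (nesym nFE)) Fy.
by move: Ly; rewrite eL; apply: span2_sub sE Ev Ex y.
Qed.

Lemma sum_components_neq0 v f g :
  E v -> v != 0 -> F f -> G g -> v = f + g -> f != 0 /\ g != 0.
Proof.
move=> Ev nv Ff Gg ev; split; apply: contra_neq nv.
- by move=> f0; apply: (regulus_cap0 hE hG (nesym nGE)) Ev _; rewrite ev f0 add0r.
- by move=> g0; apply: (regulus_cap0 hE hF (nesym nFE)) Ev _; rewrite ev g0 addr0.
Qed.

Lemma directrix_eq_span2 L v f g :
  directrix R L -> L v -> E v -> v != 0 -> F f -> G g -> v = f + g -> L = span2 f g.
Proof.
move=> dL Lv Ev nv Ff Gg ev.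
have sF := regulus_subspace hF; have sG := regulus_subspace hG.
have capFG := regulus_cap0 hF hG nFG.
have [y [ny Ly Fy]] := directrix_meet dL hF.
have [z [nz Lz Gz]] := directrix_meet dL hG.
have [a [b evyz]] : span2 y z v.
  by rewrite -(line_eq_span2 hK dL.1 (indep2_of_trivial_cap hK capFG sF sG Fy Gz ny nz) Ly Lz).
have [ef eg] : f = a *: y /\ g = b *: z.
  exact: sum_unique capFG sF sG Ff (subspaceZ _ sF Fy) Gg (subspaceZ _ sG Gz) (etrans (esym ev) evyz).
have [nf ng] := sum_components_neq0 Ev nv Ff Gg ev.
have sL := line_subspace dL.1.
have Lf : L f by rewrite ef; apply: subspaceZ.
have Lg : L g by rewrite eg; apply: subspaceZ.
exact: (line_eq_span2 hK dL.1 (indep2_of_trivial_cap hK capFG sF sG Ff Gg nf ng) Lf Lg).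
Qed.

Lemma span2_directrix v f g :
  E v -> v != 0 -> F f -> G g -> v = f + g -> directrix R (span2 f g).
Proof.
move=> Ev nv Ff Gg ev.
have sE := regulus_subspace hE; have sF := regulus_subspace hF.
have sG := regulus_subspace hG; have sfg := span2_subspace f g.
have [nf ng] := sum_components_neq0 Ev nv Ff Gg ev.
have hL : line (span2 f g).
  by exists f, g; split; first exact: (indep2_of_trivial_cap hK (regulus_cap0 hF hG nFG) sF sG Ff Gg nf ng).
split => // X RX; case: hR => _ _ _ hR2.
apply: (hR2 _ hL E F G) => //; try exact: nesym.
- by apply: meets_of_vec nv sfg sE _ Ev; exists 1, 1; rewrite !scale1r.
- exact: meets_of_vec nf sfg sF (span2_l f g) Ff.
- exact: meets_of_vec ng sfg sG (span2_r f g) Gg.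
Qed.

Lemma directrix_through P : point P -> (forall x, P x -> E x) ->
  exists L, [/\ directrix R L, (forall x, P x -> L x) &
    forall L', directrix R L' -> (forall x, P x -> L' x) -> L' = L].
Proof.
move=> /point_span1 [v [nv Pv eP]] PE; have Ev := PE v Pv.
have [f [g [Ff Gg ev]]] : exists f g, [/\ F f, G g & v = f + g].
  by case: hR => _ hdist _ _; case: (hdist F G hF hG nFG).
exists (span2 f g); split.
- exact: span2_directrix Ev nv Ff Gg ev.
- by rewrite eP => _ [a ->]; exists a, a; rewrite ev scalerDr.
- by move=> L' dL' PL'; apply: directrix_eq_span2 dL' (PL' v Pv) Ev nv Ff Gg ev.
Qed.

End Regulus.

Theorem lemma4p3 (K : unitRingType) (V : lmodType K)
  (hK : division_ring K) (hdim : dim_gt2 V)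
  (hG : exists X : V -> Prop, inG X)
  (R : (V -> Prop) -> Prop) (hR : partial_regulus R)
  (E : V -> Prop) (hE : R E) :
  [/\ (* L |-> L cap E maps directrices to points of E *)
      (forall L, directrix R L -> point (capS L E)),
      (* injective *)
      (forall L1 L2, directrix R L1 -> directrix R L2 ->
         capS L1 E = capS L2 E -> L1 = L2),
      (* surjective onto the points of E *)
      (forall P, point P -> (forall x, P x -> E x) ->
         exists L, directrix R L /\ capS L E = P) &
      (* consequently each point of E lies on a unique directrix *)
      (forall P, point P -> (forall x, P x -> E x) ->
         exists L, [/\ directrix R L, (forall x, P x -> L x) &
           forall L', directrix R L' -> (forall x, P x -> L' x) -> L' = L])].
Proof.
have [F [G [hF hG' nFE nGE nFG]]] : exists F G, [/\ R F, R G, F <> E, G <> E & F <> G].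
  by apply: exists_two_others; case: hR.
have capS_point := directrix_capS_point hK hR hE hF nFE.
have through := directrix_through hK hR hE hF hG' nFE nGE nFG.
split => //.
- move=> L1 L2 d1 d2 e.
  have [L [_ _ uniqL]] := through _ (capS_point L1 d1) (fun x => @proj2 _ _).
  by rewrite (uniqL L1 d1 (fun x => @proj1 _ _)) (uniqL L2 d2) // e => x [].
- move=> P pP PE; have [L [dL PL _]] := through P pP PE.
  exists L; split => //; symmetry; apply: (point_sub_eq hK pP (capS_point L dL)).
  by move=> x Px; split; [exact: PL | exact: PE].
Qed.
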